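(* $z^\star_{\omega,\tau}(t)\ge\frac{\tau}{L_\omega}\mathbf{1}$ (componentwise) for almost every $t\in\Omega$.
   Context: Let $\Omega=(t_0,t_E)$ bounded, $t_1,\dots,t_M\in[t_0,t_E]$; $\mathcal{X}=(H^1(\Omega))^{n_y}\times(L^2(\Omega))^{n_z}$, $x=(y,z)$. For $f:\mathbb{R}^{n_y}\times\mathbb{R}^{n_y}\times\mathbb{R}^{n_z}\times\Omega\to\mathbb{R}$, $c$ (values in $\mathbb{R}^{n_c}$), $b:(\mathbb{R}^{n_y})^M\to\mathbb{R}^{n_b}$: $F(x)=\int_\Omega f(\dot y,y,z,t)dt$, $r(x)=\int_\Omega\|c(\dot y,y,z,t)\|_2^2dt+\|b(y(t_1),\dots,y(t_M))\|_2^2$, $\Gamma(x)=-\sum_{j=1}^{n_z}\int_\Omega\log z_j(t)dt$. For $\omega\in(0,1)$, $\tau\in(0,\omega]$: $F_{\omega,\tau}=F+\frac1{2\omega}r+\tau\Gamma$, and $x^\star_{\omega,\tau}=(y^\star_{\omega,\tau},z^\star_{\omega,\tau})$ is a minimizer of $F_{\omega,\tau}$ over $\mathcal{X}$. Assumptions: (A.2) $\|c(\dot y(t),y(t),z(t),t)\|_1$ and $\|b(\dots)\|_1$ bounded for all $x$ with $z\ge0$, $t\in\Omega$; $F$ bounded below on $\{z\ge0\}$. (A.3) $f,c,b$ globally Lipschitz in all arguments except $t$. $L_F,L_r\ge2$ bound the Lipschitz constants of $F,r$ (w.r.t. $\|x\|_{\mathcal{X}}$ and $\|z\|_{L^1(\Omega)}$),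 $L_f,L_c$ are the Lipschitz constants of $f,c$, $|c|_{max}$ bounds $\|c\|_1$, and $L_\omega=\max\{L_F+\frac{L_r}{2\omega},L_f+\frac{L_c}{2\omega}|c|_{max}\}$. *)

From HB Require Import structures.
From mathcomp Require Import all_boot all_order all_algebra.
From mathcomp Require Import all_classical all_reals all_analysis.
Set Implicit Arguments. Unset Strict Implicit. Unset Printing Implicit Defensive.
Import Order.TTheory GRing.Theory Num.Theory.
Import numFieldNormedType.Exports.
Local Open Scope classical_set_scope.
Local Open Scope ring_scope.

Section Defs.
Variable R : realType.
Local Notation mu := (@lebesgue_measure R).

Definition Omega (t0 tE : R) : set R := `]t0, tE[.

Definition norm1 n (a : 'I_n -> R) : R := \sum_(i < n) `|a i|.
Definition sqnorm2 n (a : 'I_n -> R) : R := \sum_(i < n) a i ^+ 2.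

Definition L2fun (D : set R) (g : R -> R) : Prop :=
  measurable_fun D g /\ (\int[mu]_(t in D) ((g t) ^+ 2)%:E < +oo)%E.

(* x = (y, z) in X = (H^1(Omega))^ny x (L^2(Omega))^nz ; y is the (absolutely
   continuous) representative of an H^1 function, v is its weak derivative *)
Definition inX (t0 tE : R) ny nz (y v : R -> 'I_ny -> R) (z : R -> 'I_nz -> R)
  : Prop :=
  (forall i : 'I_ny,
     [/\ L2fun (Omega t0 tE) (fun t => y t i),
         L2fun (Omega t0 tE) (fun t => v t i) &
         forall t, t0 <= t <= tE ->
           y t i = y t0 i + \int[mu]_(s in `[t0, t]) v s i]) /\
  (forall j : 'I_nz, L2fun (Omega t0 tE) (fun t => z t j)).

Definition z_nonneg (t0 tE : R) nz (z : R -> 'I_nz -> R) : Prop :=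
  forall j : 'I_nz, \forall t \ae mu, Omega t0 tE t -> 0 <= z t j.

Definition normX (t0 tE : R) ny nz (y v : R -> 'I_ny -> R) (z : R -> 'I_nz -> R)
  : R :=
  Num.sqrt (\sum_(i < ny) (\int[mu]_(t in Omega t0 tE) (y t i ^+ 2)
                           + \int[mu]_(t in Omega t0 tE) (v t i ^+ 2))
            + \sum_(j < nz) \int[mu]_(t in Omega t0 tE) (z t j ^+ 2)).

Definition normL1 (t0 tE : R) nz (z : R -> 'I_nz -> R) : R :=
  \int[mu]_(t in Omega t0 tE) norm1 (z t).

Definition Fobj (t0 tE : R) ny nz
  (f : ('I_ny -> R) -> ('I_ny -> R) -> ('I_nz -> R) -> R -> R)
  (y v : R -> 'I_ny -> R) (z : R -> 'I_nz -> R) : R :=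
  \int[mu]_(t in Omega t0 tE) f (v t) (y t) (z t) t.

Definition robj (t0 tE : R) ny nz nc nb M (tk : 'I_M -> R)
  (c : ('I_ny -> R) -> ('I_ny -> R) -> ('I_nz -> R) -> R -> 'I_nc -> R)
  (b : ('I_M -> 'I_ny -> R) -> 'I_nb -> R)
  (y v : R -> 'I_ny -> R) (z : R -> 'I_nz -> R) : R :=
  \int[mu]_(t in Omega t0 tE) sqnorm2 (c (v t) (y t) (z t) t)
  + sqnorm2 (b (fun k => y (tk k))).

Definition Gamma (t0 tE : R) nz (z : R -> 'I_nz -> R) : \bar R :=
  if `[< forall j : 'I_nz, \forall t \ae mu, Omega t0 tE t -> 0 < z t j >]
  then (- \sum_(j < nz) \int[mu]_(t in Omega t0 tE) (ln (z t j))%:E)%E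
  else +oo%E.

Definition Fomtau (t0 tE : R) ny nz nc nb M (tk : 'I_M -> R)
  (f : ('I_ny -> R) -> ('I_ny -> R) -> ('I_nz -> R) -> R -> R)
  (c : ('I_ny -> R) -> ('I_ny -> R) -> ('I_nz -> R) -> R -> 'I_nc -> R)
  (b : ('I_M -> 'I_ny -> R) -> 'I_nb -> R) (omega tau : R)
  (y v : R -> 'I_ny -> R) (z : R -> 'I_nz -> R) : \bar R :=
  ((Fobj t0 tE f y v z)%:E
   + (robj t0 tE tk c b y v z / (2 * omega))%:E
   + tau%:E * Gamma t0 tE z)%E.

End Defs.

From HB Require Import structures.
From mathcomp Require Import all_boot all_order all_algebra.
From mathcomp Require Import all_classical all_reals all_analysis.
From mathcomp Require Import measurable_realfun lra.
Import Order.TTheory GRing.Theory Num.Theory.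
Import numFieldNormedType.Exports.
Local Open Scope classical_set_scope.
Local Open Scope ring_scope.

(* The barrier [tau * Gamma] pushes every component of the minimizer away from
   0, while [F + r / (2 omega)] pulls it back at a bounded rate: on nonnegative
   [z] it is [L]-Lipschitz for the L1 norm, with [L = L_F + L_r / (2 omega)],
   and [L <= L_omega].  Raise one component [z_j] of the minimizer to
   [max(z_j, a)] with [a = tau / L].  The barrier drops by
   [tau * int (ln max(z_j, a) - ln z_j)] and the rest grows by at most
   [L * int (max(z_j, a) - z_j)], so minimality gives
   [int (ln max(z_j, a) - ln z_j) <= int (max(z_j, a) - z_j) / a].
   Since [ln a - ln z > (a - z) / a] for [0 < z < a] (strict concavity of [ln]),
   the difference of the two integrands is nonnegative with nonpositive
   integral, hence vanishes a.e., which forces [z_j >= a] a.e.  That the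
   barrier is finite at the minimizer (compare with [z = 1]) yields [z > 0]
   a.e. and the integrability of [ln z_j]. *)

Lemma ler_dist_add_div (R : realFieldType) (x x' y y' k A B N : R) : 0 <= k ->
  `|x - x'| <= A * N -> `|y - y'| <= B * N ->
  `|(x + y / k) - (x' + y' / k)| <= (A + B / k) * N.
Proof.
move=> k_ge0 /ler_normlP[x_le1 x_le2] /ler_normlP[y_le1 y_le2].
have kV_ge0 : 0 <= k^-1 by rewrite invr_ge0.
have yk_le1 := ler_wpM2r kV_ge0 y_le1; have yk_le2 := ler_wpM2r kV_ge0 y_le2.
by apply/ler_normlP; split; lra.
Qed.

Section ln_bounds.
Context {R : realType}.
Implicit Types a x : R.

Lemma ln_le_sqr x : ln x <= x ^+ 2.
Proof.
have [x1|x1] := leP 1 x; last by rewrite (le_trans (ln_le0 (ltW x1))) ?sqr_ge0.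
apply: le_trans (ltW (ln_sublinear (lt_le_trans ltr01 x1))) _.
by rewrite expr2 ler_peMl// (le_trans ler01).
Qed.

Lemma lt_sub_div_ln a x : 0 < x < a ->
  (a - x) / a < ln a - ln x.
Proof.
move=> /andP[x0 xa]; have a0 := lt_trans x0 xa.
set u := ln x - ln a.
have eu : expR u = x / a by rewrite /u expRB !lnK ?posrE.
have u0 : u != 0.
  by rewrite /u subr_eq0 (inj_in_eq (@ln_inj R)) ?posrE// lt_eqF.
have := expR_gt1Dx u0; rewrite eu mulrBl divff ?gt_eqF// /u; lra.
Qed.

Definition barrier_gap a x : R :=
  ln (Num.max x a) - ln x - (Num.max x a - x) / a.

Lemma barrier_gap_gt0 a x : 0 < x < a -> 0 < barrier_gap a x.
Proof.
move=> /andP[x0 xa]; rewrite /barrier_gap max_r ?ltW// subr_gt0.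
by rewrite lt_sub_div_ln ?x0.
Qed.

Lemma barrier_gap_ge0 a x : 0 < a -> 0 < x -> 0 <= barrier_gap a x.
Proof.
move=> a0 x0; have [ax|xa] := leP a x.
  by rewrite /barrier_gap max_l// !subrr mul0r subr0.
by rewrite ltW// barrier_gap_gt0 ?x0.
Qed.

Lemma barrier_gap_eq0 a x : 0 < a -> 0 < x -> barrier_gap a x = 0 -> a <= x.
Proof.
move=> a0 x0 h0; rewrite leNgt; apply/negP => xa.
by have := @barrier_gap_gt0 a x; rewrite x0 xa h0 ltxx => /(_ isT).
Qed.

End ln_bounds.

Section barrier_integrals.
Context {d} {T : measurableType d} {R : realType}.
Variables (mu : {measure set T -> \bar R}) (D : set T).
Hypothesis mD : measurable D.

Lemma integral_ln_lt_pinfty (g : T -> R) : measurable_fun D g ->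
  (\int[mu]_(x in D) (g x ^+ 2)%:E < +oo)%E ->
  (\int[mu]_(x in D) (ln (g x))%:E < +oo)%E.
Proof.
move=> mg ig; have mlng : measurable_fun D (fun x => (ln (g x))%:E).
  by apply/measurable_EFinP; apply: measurableT_comp.
rewrite integralE; apply: le_lt_trans (leeB (lexx _) (integral_ge0 _ _)) _.
  by move=> x _; exact: funeneg_ge0.
rewrite sube0; apply: le_lt_trans ig; apply: ge0_le_integral => //.
- exact: measurable_funepos.
- by apply/measurable_EFinP; exact: measurable_funX.
- by move=> x _; rewrite funeposE ge_max !lee_fin ln_le_sqr sqr_ge0.
Qed.

Lemma integrable_EFin_Rintegral (f : T -> R) : mu.-integrable D (EFin \o f) ->
  (\int[mu]_(x in D) (f x)%:E)%E = (\int[mu]_(x in D) f x)%:E.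
Proof. by move=> fint; rewrite /Rintegral fineK// integrable_fin_num. Qed.

Lemma integral_le0_ae_eq0 (h : T -> R) : measurable_fun D h ->
  (\forall x \ae mu, D x -> 0 <= h x) ->
  (\int[mu]_(x in D) (h x)%:E <= 0)%E ->
  \forall x \ae mu, D x -> h x = 0.
Proof.
move=> mh h_ge0 h_le0.
have abshE : (\int[mu]_(x in D) `|(h x)%:E| = \int[mu]_(x in D) (h x)%:E)%E.
  apply: ae_eq_integral => //.
  - by apply: measurableT_comp => //; exact/measurable_EFinP.
  - exact/measurable_EFinP.
  - by apply: filterS h_ge0 => x hx Dx; rewrite gee0_abs ?lee_fin ?hx.
have : ae_eq mu D (EFin \o h) (cst 0%E).
  apply/ae_eq_integral_abs => //; first exact/measurable_EFinP.
  apply/eqP; rewrite eq_le {1}abshE h_le0 /=.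
  by apply: integral_ge0 => x _; rewrite lee_fin.
by apply: filterS => x hx Dx; have [] := hx Dx.
Qed.

Lemma ae_ge_of_integral_barrier_gap_le0 (z : T -> R) (a : R) : 0 < a ->
  (\forall x \ae mu, D x -> 0 < z x) ->
  measurable_fun D (fun x => barrier_gap a (z x)) ->
  (\int[mu]_(x in D) (barrier_gap a (z x))%:E <= 0)%E ->
  \forall x \ae mu, D x -> a <= z x.
Proof.
move=> a0 z_gt0 mgap gap_le0.
have gap_ge0 : \forall x \ae mu, D x -> 0 <= barrier_gap a (z x).
  by apply: filterS z_gt0 => x zx Dx; exact: barrier_gap_ge0 (zx Dx).
move: z_gt0 (integral_le0_ae_eq0 _ mgap gap_ge0 gap_le0).
by apply: filterS2 => x zx gx Dx; exact: barrier_gap_eq0 a0 (zx Dx) (gx Dx).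
Qed.

Hypothesis muD : (mu D < +oo)%E.

Lemma integrable_cst (k : R) : mu.-integrable D (fun _ => k%:E).
Proof. exact: measurable_bounded_integrable (bounded_cst _ _). Qed.

Lemma sqr_integrable_integrable (g : T -> R) : measurable_fun D g ->
  (\int[mu]_(x in D) (g x ^+ 2)%:E < +oo)%E -> mu.-integrable D (EFin \o g).
Proof.
move=> mg ig.
have ig2 : mu.-integrable D (fun x => (g x ^+ 2)%:E).
  apply/integrableP; split.
    by apply/measurable_EFinP; exact: measurable_funX.
  by under eq_integral do rewrite /= ger0_norm ?sqr_ge0//.
apply: (le_integrable mD _ _ (integrableD mD (integrable_cst 1) ig2)).
  exact/measurable_EFinP.
move=> x _ /=; rewrite !lee_fin [X in _ <= X]ger0_norm ?addr_ge0 ?sqr_ge0//.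
by rewrite -real_normK ?num_real//; have := normr_ge0 (g x); nra.
Qed.

Lemma sqr_integrable_maxr (g : T -> R) (a : R) : measurable_fun D g ->
  (\int[mu]_(x in D) (g x ^+ 2)%:E < +oo)%E ->
  (\int[mu]_(x in D) (Num.max (g x) a ^+ 2)%:E < +oo)%E.
Proof.
move=> mg ig; have mg2 : measurable_fun D (fun x => (g x ^+ 2)%:E).
  by apply/measurable_EFinP; exact: measurable_funX.
apply: (@le_lt_trans _ _ (\int[mu]_(x in D) ((g x ^+ 2)%:E + (a ^+ 2)%:E))%E).
  apply: ge0_le_integral => //.
  - by move=> x _; rewrite lee_fin sqr_ge0.
  - apply/measurable_EFinP; apply: measurable_funX.
    by apply: measurable_maxr => //; exact: measurable_cst.
  - by apply: emeasurable_funD => //; exact: measurable_cst.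
  - move=> x _; rewrite -EFinD lee_fin.
    by have [_|_] := leP (g x) a; rewrite ?lerDr ?lerDl sqr_ge0.
rewrite ge0_integralD//; last 2 first.
- by move=> x _; rewrite lee_fin sqr_ge0.
- by move=> x _; rewrite lee_fin sqr_ge0.
by rewrite lte_add_pinfty// integral_cst// lte_mul_pinfty ?lee_fin ?sqr_ge0.
Qed.

Lemma integrable_maxr_sub (g : T -> R) (a : R) : measurable_fun D g ->
  (\int[mu]_(x in D) (g x ^+ 2)%:E < +oo)%E ->
  mu.-integrable D (EFin \o (fun x => Num.max (g x) a - g x)).
Proof.
move=> mg ig; have mmax : measurable_fun D (fun x => Num.max (g x) a).
  by apply: measurable_maxr => //; exact: measurable_cst.
have := integrableB mD (sqr_integrable_integrable _ mmax
  (sqr_integrable_maxr _ a mg ig)) (sqr_integrable_integrable _ mg ig).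
by apply: (eq_integrable mD) => x _; rewrite /= EFinB.
Qed.

Lemma integrable_ln_maxr_sub (g : T -> R) (a : R) : measurable_fun D g ->
  mu.-integrable D (EFin \o (fun x => ln (g x))) ->
  mu.-integrable D (EFin \o (fun x => ln (Num.max (g x) a) - ln (g x))).
Proof.
move=> mg ilng.
apply: (le_integrable mD _ _ (integrableD mD (integrable_cst `|ln a|)
  (integrable_abse ilng))).
  apply/measurable_EFinP; apply: measurable_funB; apply: measurableT_comp => //.
  by apply: measurable_maxr => //; exact: measurable_cst.
move=> x _ /=; rewrite lee_fin [X in _ <= X]ger0_norm ?addr_ge0//.
by have [_|_] := leP (g x) a; rewrite ?subrr ?normr0 ?addr_ge0 ?ler_normB.
Qed.

Lemma ae_ge_of_ln_gain_le (z : T -> R) (a : R) : 0 < a ->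
  measurable_fun D z -> (\int[mu]_(x in D) (z x ^+ 2)%:E < +oo)%E ->
  mu.-integrable D (EFin \o (fun x => ln (z x))) ->
  (\forall x \ae mu, D x -> 0 < z x) ->
  \int[mu]_(x in D) (ln (Num.max (z x) a) - ln (z x))
    <= (\int[mu]_(x in D) (Num.max (z x) a - z x)) / a ->
  \forall x \ae mu, D x -> a <= z x.
Proof.
move=> a0 mz iz ilnz z_gt0 gain_le.
have gain_int := integrable_ln_maxr_sub _ a mz ilnz.
have cost_int := integrableZr mD a^-1 (integrable_maxr_sub _ a mz iz).
have gap_int : mu.-integrable D (EFin \o (fun x => barrier_gap a (z x))).
  have := integrableB mD gain_int cost_int.
  by apply: (eq_integrable mD) => x _ /=; rewrite /cst -EFinD.
apply: (ae_ge_of_integral_barrier_gap_le0 _ _ a0 z_gt0).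
  by apply/measurable_EFinP; exact: measurable_int gap_int.
rewrite integrable_EFin_Rintegral// lee_fin.
have -> : \int[mu]_(x in D) barrier_gap a (z x) = \int[mu]_(x in D)
    ((ln (Num.max (z x) a) - ln (z x)) - (Num.max (z x) a - z x) * a^-1).
  by apply: eq_Rintegral.
by rewrite RintegralB// RintegralZr ?subr_le0//; exact: integrable_maxr_sub.
Qed.

End barrier_integrals.

(* Instance search does not find this filter by itself. *)
#[local] Instance ae_lebesgue_filter (R : realType) :
  Filter (nbhs (almost_everywhere (@lebesgue_measure R))) :=
  @ae_filter_ringOfSetsType _ (measurableTypeR R) R _.

Definition L2_components {R : realType} (t0 tE : R) {nz : nat}
  (z : R -> 'I_nz -> R) : Prop :=
  forall j, L2fun (Omega t0 tE) (fun t => z t j).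

Definition raise_comp {R : realType} {nz : nat} (z : R -> 'I_nz -> R)
  (j0 : 'I_nz) (a : R) : R -> 'I_nz -> R :=
  fun t j => if j == j0 then Num.max (z t j) a else z t j.

Section log_barrier.
Context {R : realType} {t0 tE : R} {nz : nat}.
Local Notation mu := (@lebesgue_measure R).
Local Notation D := (Omega t0 tE).
Implicit Types (z : R -> 'I_nz -> R) (j : 'I_nz) (a : R).

Local Notation mR := (measurableTypeR R).

Lemma measurable_Omega : measurable (D : set mR).
Proof. exact: measurable_itv. Qed.

Lemma lebesgue_Omega_lt_pinfty : (mu D < +oo)%E.
Proof.
by rewrite /Omega lebesgue_measure_itv/=; case: ifP => _; rewrite ?ltry.
Qed.

Local Hint Resolve measurable_Omega lebesgue_Omega_lt_pinfty : core.

(* [L2fun] states measurability for the default measurable structure on [R];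
   the lemmas above need it for [mR], the domain of [lebesgue_measure]. *)
Lemma L2fun_measurable {g : R -> R} :
  L2fun D g -> measurable_fun (D : set mR) g.
Proof. by case. Qed.

Local Notation L2_components := (L2_components t0 tE).

Lemma L2_components_cst1 : L2_components (fun _ (_ : 'I_nz) => 1).
Proof.
move=> j; split; first exact: measurable_cst.
under eq_integral do rewrite expr1n.
by rewrite integral_cst// mul1e.
Qed.

Lemma L2_components_raise z j0 a :
  L2_components z -> L2_components (raise_comp z j0 a).
Proof.
move=> zL2 j; rewrite /raise_comp; have [_|//] := eqVneq j j0.
have [mz iz] := zL2 j; split.
  by apply: measurable_maxr => //; exact: measurable_cst.
exact: sqr_integrable_maxr.
Qed.

Lemma z_nonneg_raise z j0 a : 0 <= a ->
  z_nonneg t0 tE z -> z_nonneg t0 tE (raise_comp z j0 a).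
Proof.
move=> a0 z_ge0 j; apply: filterS (z_ge0 j) => t zt Dt; rewrite /raise_comp.
by case: eqP => _; rewrite ?le_max ?zt ?a0 ?orbT.
Qed.

Lemma normL1_sub_raise z j0 a : normL1 t0 tE (z - raise_comp z j0 a) =
  \int[mu]_(t in D) (Num.max (z t j0) a - z t j0).
Proof.
have subE t j : (z - raise_comp z j0 a) t j = z t j - raise_comp z j0 a t j.
  by [].
apply: eq_Rintegral => t _; rewrite /norm1 (bigD1 j0)//= big1 => [|j].
  rewrite subE /raise_comp eqxx addr0 distrC ger0_norm//.
  by rewrite subr_ge0 le_max lexx.
by move=> /negbTE jj0; rewrite subE /raise_comp jj0 subrr normr0.
Qed.

Lemma Gamma_cst1 : Gamma t0 tE (fun _ (_ : 'I_nz) => 1 : R) = 0%E.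
Proof.
rewrite /Gamma asboolT => [|j]; last by apply: aeW => t _; exact: ltr01.
rewrite big1 ?oppe0// => j _; under eq_integral do rewrite ln1.
exact: integral0.
Qed.

Lemma Gamma_neq_pinfty_gt0 z : Gamma t0 tE z != +oo%E ->
  forall j, \forall t \ae mu, D t -> 0 < z t j.
Proof. by rewrite /Gamma; case: asboolP. Qed.

Lemma integrable_ln_components z : L2_components z -> Gamma t0 tE z != +oo%E ->
  forall j, mu.-integrable D (EFin \o (fun t => ln (z t j))).
Proof.
move=> zL2 Gz j; have [_ iz] := zL2 j; have mz := L2fun_measurable (zL2 j).
have mlnz : measurable_fun (D : set mR) (fun t => ln (z t j)).
  by apply: measurableT_comp.
apply/integrableP; split; first exact/measurable_EFinP.
rewrite integral_fin_num_abs// fin_numE.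
rewrite (lt_eqF (integral_ln_lt_pinfty _ _ measurable_Omega _ mz iz)) andbT.
apply: contra Gz => /eqP lnz_Ny.
by rewrite /Gamma; case: asboolP => // _; rewrite (bigD1 j) //= lnz_Ny addNye.
Qed.

Lemma GammaE z : L2_components z -> Gamma t0 tE z != +oo%E ->
  Gamma t0 tE z = (- \sum_(j < nz) \int[mu]_(t in D) ln (z t j))%:E.
Proof.
move=> zL2 Gz; have lnz_int := integrable_ln_components _ zL2 Gz.
move: Gz; rewrite /Gamma; case: asboolP => // _ _.
rewrite EFinN -sumEFin; congr (- _)%E; apply: eq_bigr => j _.
exact: integrable_EFin_Rintegral.
Qed.

Lemma Gamma_raise z j0 a :
  L2_components z -> Gamma t0 tE z != +oo%E -> 0 < a ->
  Gamma t0 tE (raise_comp z j0 a) = (Gamma t0 tE z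
    - (\int[mu]_(t in D) (ln (Num.max (z t j0) a) - ln (z t j0)))%:E)%E.
Proof.
move=> zL2 Gz a0; set ell := fun t => _ - _.
have lnz_int := integrable_ln_components _ zL2 Gz.
have ell_int : mu.-integrable D (EFin \o ell).
  exact: integrable_ln_maxr_sub (L2fun_measurable (zL2 j0)) (lnz_int j0).
have int_ln_raise j : (\int[mu]_(t in D) (ln (raise_comp z j0 a t j))%:E)%E =
    (\int[mu]_(t in D) ln (z t j)
     + if j == j0 then \int[mu]_(t in D) ell t else 0)%:E.
  rewrite /raise_comp; case: eqP => [->|_]; last first.
    by rewrite addr0 integrable_EFin_Rintegral.
  rewrite (eq_integral (fun t : mR => (ln (z t j0))%:E + (ell t)%:E)%E);
    last first.
    by move=> t _; rewrite -EFinD /ell addrC subrK.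
  by rewrite integralD_EFin// EFinD !integrable_EFin_Rintegral.
rewrite (GammaE _ zL2 Gz) /Gamma asboolT => [|j]; last first.
  apply: filterS (Gamma_neq_pinfty_gt0 _ Gz j) => t zt Dt; rewrite /raise_comp.
  by case: eqP => _; rewrite ?lt_max ?zt.
rewrite (eq_bigr _ (fun j _ => int_ln_raise j)) sumEFin big_split /=.
by rewrite -big_mkcond big_pred1_eq -EFinB opprD.
Qed.

Theorem log_barrier_minimizer_ge (G : (R -> 'I_nz -> R) -> R) (L tau : R) zs :
  0 < tau -> 0 < L -> L2_components zs ->
  (forall z z', L2_components z -> L2_components z' ->
     z_nonneg t0 tE z -> z_nonneg t0 tE z' ->
     `|G z - G z'| <= L * normL1 t0 tE (z - z')) ->
  (forall z, L2_components z ->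
     ((G zs)%:E + tau%:E * Gamma t0 tE zs
       <= (G z)%:E + tau%:E * Gamma t0 tE z)%E) ->
  forall j0, \forall t \ae mu, D t -> tau / L <= zs t j0.
Proof.
move=> tau0 L0 zsL2 G_lip zs_min j0.
have Gzs : Gamma t0 tE zs != +oo%E.
  apply: contraTN (zs_min _ L2_components_cst1) => /eqP ->.
  by rewrite Gamma_cst1 mule0 adde0 gt0_muley ?lte_fin// addey// leye_eq.
have zs_gt0 := Gamma_neq_pinfty_gt0 _ Gzs.
have zs_ge0 : z_nonneg t0 tE zs.
  by move=> j; apply: filterS (zs_gt0 j) => t zt Dt; exact/ltW/zt.
set a := tau / L; have a0 : 0 < a by rewrite divr_gt0.
have mzs := L2fun_measurable (zsL2 j0); have [_ izs] := zsL2 j0.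
apply: ae_ge_of_ln_gain_le => //; first exact: integrable_ln_components.
rewrite /a invf_div mulrA ler_pdivlMr//.
have zpL2 := L2_components_raise _ j0 a zsL2.
have := zs_min _ zpL2; rewrite Gamma_raise// (GammaE _ zsL2 Gzs).
rewrite -EFinB -!EFinM -!EFinD lee_fin => zs_le_zp.
have := G_lip _ _ zsL2 zpL2 zs_ge0 (z_nonneg_raise _ j0 _ (ltW a0) zs_ge0).
rewrite normL1_sub_raise => /ler_normlP[Gzp_le _].
lra.
Qed.

End log_barrier.

Theorem mainTheorem14 (R : realType) (ny nz nc nb M : nat)
  (t0 tE : R) (tk : 'I_M -> R)
  (f : ('I_ny -> R) -> ('I_ny -> R) -> ('I_nz -> R) -> R -> R)
  (c : ('I_ny -> R) -> ('I_ny -> R) -> ('I_nz -> R) -> R -> 'I_nc -> R)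
  (b : ('I_M -> 'I_ny -> R) -> 'I_nb -> R)
  (omega tau LF Lr Lf Lc cmax : R)
  (ys vs : R -> 'I_ny -> R) (zs : R -> 'I_nz -> R) :
  (* setting *)
  t0 < tE ->
  (forall k, t0 <= tk k <= tE) ->
  0 < omega < 1 -> 0 < tau <= omega ->
  (* well-definedness of F and r on X (implicit in the paper) *)
  (forall y v z, inX t0 tE y v z ->
     (@lebesgue_measure R).-integrable (Omega t0 tE)
       (fun t => (f (v t) (y t) (z t) t)%:E)) ->
  (forall y v z, inX t0 tE y v z -> forall i,
     measurable_fun (Omega t0 tE) (fun t => c (v t) (y t) (z t) t i)) ->
  (* (A.2) *)
  (forall a a' w t, (forall j, 0 <= w j) -> Omega t0 tE t ->
     norm1 (c a a' w t) <= cmax) ->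
  (exists Bb, forall p, norm1 (b p) <= Bb) ->
  (exists m, forall y v z, inX t0 tE y v z -> z_nonneg t0 tE z ->
     m <= Fobj t0 tE f y v z) ->
  (* (A.3) with constants L_f, L_c *)
  (forall a1 a2 a1' a2' w w' t, Omega t0 tE t ->
     `|f a1 a2 w t - f a1' a2' w' t|
       <= Lf * (norm1 (a1 - a1') + norm1 (a2 - a2') + norm1 (w - w'))) ->
  (forall a1 a2 a1' a2' w w' t, Omega t0 tE t ->
     norm1 (c a1 a2 w t - c a1' a2' w' t)
       <= Lc * (norm1 (a1 - a1') + norm1 (a2 - a2') + norm1 (w - w'))) ->
  (exists Lb, forall p p',
     norm1 (b p - b p') <= Lb * \sum_(k < M) norm1 (p k - p' k)) ->
  (* L_F, L_r >= 2 bound the Lipschitz constants of F, r *)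
  2 <= LF -> 2 <= Lr ->
  (forall y v z y' v' z', inX t0 tE y v z -> inX t0 tE y' v' z' ->
     z_nonneg t0 tE z -> z_nonneg t0 tE z' ->
     `|Fobj t0 tE f y v z - Fobj t0 tE f y' v' z'|
       <= LF * normX t0 tE (y - y') (v - v') (z - z') /\
     `|robj t0 tE tk c b y v z - robj t0 tE tk c b y' v' z'|
       <= Lr * normX t0 tE (y - y') (v - v') (z - z')) ->
  (forall y v z z', inX t0 tE y v z -> inX t0 tE y v z' ->
     z_nonneg t0 tE z -> z_nonneg t0 tE z' ->
     `|Fobj t0 tE f y v z - Fobj t0 tE f y v z'|
       <= LF * normL1 t0 tE (z - z') /\
     `|robj t0 tE tk c b y v z - robj t0 tE tk c b y v z'|
       <= Lr * normL1 t0 tE (z - z')) ->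
  (* x^star = (y^star, z^star) minimizes F_{omega,tau} over X *)
  inX t0 tE ys vs zs ->
  (forall y v z, inX t0 tE y v z ->
     (Fomtau t0 tE tk f c b omega tau ys vs zs
        <= Fomtau t0 tE tk f c b omega tau y v z)%E) ->
  (* conclusion *)
  let Lomega := Num.max (LF + Lr / (2 * omega))
                        (Lf + Lc / (2 * omega) * cmax) in
  \forall t \ae (@lebesgue_measure R),
    Omega t0 tE t -> forall j : 'I_nz, tau / Lomega <= zs t j.
Proof.
move=> _ _ /andP[omega0 _] /andP[tau0 _] _ _ _ _ _ _ _ _ LF2 Lr2 _ LipL1
  [ys_ok zsL2] zs_min Lomega.
set L := LF + Lr / (2 * omega).
have L0 : 0 < L by rewrite ltr_wpDr ?divr_ge0 ?mulr_ge0 ?(le_trans _ Lr2) ?ltW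
  ?(lt_le_trans _ LF2).
have tau_Lomega : tau / Lomega <= tau / L.
  by rewrite ler_pM2l// lef_pV2 ?posrE ?(lt_le_trans L0) ?le_max ?lexx.
pose G z := Fobj t0 tE f ys vs z + robj t0 tE tk c b ys vs z / (2 * omega).
have G_lip z z' : L2_components t0 tE z -> L2_components t0 tE z' ->
    z_nonneg t0 tE z -> z_nonneg t0 tE z' ->
    `|G z - G z'| <= L * normL1 t0 tE (z - z').
  move=> zL2 z'L2 z_ge0 z'_ge0.
  have [F_lip r_lip] := LipL1 _ _ _ _ (conj ys_ok zL2) (conj ys_ok z'L2)
    z_ge0 z'_ge0.
  by apply: ler_dist_add_div F_lip r_lip; rewrite mulr_ge0// ltW.
have G_min z : L2_components t0 tE z -> ((G zs)%:E + tau%:E * Gamma t0 tE zs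
    <= (G z)%:E + tau%:E * Gamma t0 tE z)%E.
  by move=> zL2; have := zs_min _ _ _ (conj ys_ok zL2); rewrite /Fomtau !EFinD.
have := filter_forall (ae_lebesgue_filter R)
  (log_barrier_minimizer_ge _ _ _ _ tau0 L0 zsL2 G_lip G_min).
by apply: filterS => t zs_ge Dt j; exact: le_trans tau_Lomega (zs_ge j Dt).
Qed.
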